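(* Let $\bm{\mu}\in X^{\mathcal{L}(\mathcal{T})}$ with $V_{s_0}(\bm{\mu})\neq\theta$. For every leaf $\ell\in\mathcal{L}(\mathcal{T})$ with $w^{s_0}_\ell(\bm{\mu})>0$, we have $\mu_\ell>\theta$ if $a_{s_0}(\bm{\mu})=$'win' and $\mu_\ell<\theta$ if $a_{s_0}(\bm{\mu})=$'lose'.
   Context: $\mathcal{T}$ is a finite rooted tree with node set $S$, root $s_0$, children $\mathcal{C}(s)$, leaves $\mathcal{L}(\mathcal{T})$, and $\mathcal{D}(s)$ the leaves descending from $s$; internal labels $L(s)\in\{\text{MAX},\text{MIN}\}$. $X\subseteq\mathbb{R}$ mean-parameter set of a one-parameter exponential family; $d(x,y)$ KL divergence between members with means $x,y$ (so $d(x,y)\ge0$ with equality iff $x=y$); threshold $\theta\in X$. $V_s(\bm{\mu})=\mu_s$ at leaves, max/min of children's values at MAX/MIN nodes; $a_s(\bm{\mu})=$'win' iff $V_s(\bm{\mu})\ge\theta$. Recursive weights: $a^*=a_{s_0}(\bm{\mu})$; $P=$MAX, $Q=$MIN if $a^*=$'win', swapped if 'lose'. Leaf $s$: $w^s_s=1$, $d_s=d(\mu_s,\theta)$ if ($a^*=$'win', $\mu_s\ge\theta$) or ($a^*=$'lose', $\mu_s<\theta$), else $0$. $L(s)=P$: $d_s=\max_c d_c$, fixed $c^*(s)\in\arg\max_c d_c$, and if $d_s>0$: $w^s_\ell=w^{c^*(s)}_\ell$ for $\ell\in\mathcal{D}(c^*(s))$, $0$ for other $\ell\in\mathcal{D}(s)$.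 $L(s)=Q$ and all $d_c>0$: $d_s=(\sum_c1/d_c)^{-1}$, $w^s_\ell=\frac{w^c_\ell/d_c}{\sum_{c'}1/d_{c'}}$ for $\ell\in\mathcal{D}(c)$. $L(s)=Q$ otherwise: $d_s=0$. Internal $s$ with $d_s=0$: $\bm{w}^s$ a fixed arbitrary probability vector on $\mathcal{D}(s)$. *)

From Stdlib Require Import Reals List Arith.
Import ListNotations.
Open Scope R_scope.

Inductive label := MAX | MIN.

Definition label_eqb (a b : label) : bool :=
  match a, b with MAX, MAX | MIN, MIN => true | _, _ => false end.

Inductive tree := Leaf : nat -> tree | Node : label -> list tree -> tree.

(** D(s): the leaves descending from s. *)
Fixpoint leaves (t : tree) : list nat :=
  match t with
  | Leaf l => [l]
  | Node _ cs => flat_map leaves cs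
  end.

Fixpoint subtrees (t : tree) : list tree :=
  match t with
  | Leaf l => [Leaf l]
  | Node b cs => Node b cs :: flat_map subtrees cs
  end.

Fixpoint well_formed (t : tree) : Prop :=
  match t with
  | Leaf _ => True
  | Node _ cs => cs <> [] /\ (fix wf_list (l : list tree) : Prop :=
                              match l with
                              | [] => True
                              | c :: l' => well_formed c /\ wf_list l'
                              end) cs
  end.

Definition maxlist (l : list R) : R :=
  match l with [] => 0 | x :: l' => fold_left Rmax l' x end.
Definition minlist (l : list R) : R :=
  match l with [] => 0 | x :: l' => fold_left Rmin l' x end.

Fixpoint value (mu : nat -> R) (t : tree) : R :=
  match t with
  | Leaf l => mu l
  | Node MAX cs => maxlist (map (value mu) cs)
  | Node MIN cs => minlist (map (value mu) cs)
  end.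

Definition rpos (x : R) : bool := if Rlt_dec 0 x then true else false.

Definition Plab (win : bool) : label := if win then MAX else MIN.

(** d_s, where [win] encodes a* = 'win', [dKL] is the divergence d,
    [theta] the threshold. *)
Fixpoint dval (dKL : R -> R -> R) (theta : R) (mu : nat -> R) (win : bool)
  (t : tree) : R :=
  match t with
  | Leaf l =>
      if win then (if Rle_dec theta (mu l) then dKL (mu l) theta else 0)
      else (if Rlt_dec (mu l) theta then dKL (mu l) theta else 0)
  | Node b cs =>
      let ds := map (dval dKL theta mu win) cs in
      if label_eqb b (Plab win) then maxlist ds
      else if forallb rpos ds then / fold_right Rplus 0 (map Rinv ds)
      else 0
  end.

(** The weights w^s (as functions on leaf labels; only the values on
    D(s) are meaningful).  [cstar s] is the fixed index of the chosen
    child c*(s) in the argmax at a P-node s, and [arb s] is the fixed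
    arbitrary probability vector used at internal nodes with d_s = 0. *)
Fixpoint weights (dKL : R -> R -> R) (theta : R) (mu : nat -> R) (win : bool)
  (cstar : tree -> nat) (arb : tree -> nat -> R) (t : tree) : nat -> R :=
  match t with
  | Leaf l => fun _ => 1
  | Node b cs =>
      let ws := map (weights dKL theta mu win cstar arb) cs in
      let ds := map (dval dKL theta mu win) cs in
      let ls := map leaves cs in
      let dS := dval dKL theta mu win (Node b cs) in
      if Rlt_dec 0 dS then
        if label_eqb b (Plab win) then
          fun l =>
            if in_dec Nat.eq_dec l (nth (cstar (Node b cs)) ls [])
            then nth (cstar (Node b cs)) ws (fun _ => 0) l else 0
        else
          (* Q-node, all d_c > 0 *)
          fun l =>
            fold_right Rplus 0
              (map (fun p : (list nat * (nat -> R)) * R =>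
                      let '((lc, wc), dc) := p in
                      if in_dec Nat.eq_dec l lc then wc l / dc else 0)
                   (combine (combine ls ws) ds))
            / fold_right Rplus 0 (map Rinv ds)
      else arb (Node b cs)
  end.

Definition cstar_valid (dKL : R -> R -> R) (theta : R) (mu : nat -> R)
  (win : bool) (cstar : tree -> nat) (root : tree) : Prop :=
  forall b cs, In (Node b cs) (subtrees root) -> b = Plab win ->
    (cstar (Node b cs) < length cs)%nat /\
    forall c, In c cs ->
      dval dKL theta mu win c <=
      dval dKL theta mu win (nth (cstar (Node b cs)) cs (Leaf 0)).

Definition arb_valid (arb : tree -> nat -> R) (root : tree) : Prop :=
  forall b cs, In (Node b cs) (subtrees root) ->
    (forall l, In l (leaves (Node b cs)) -> 0 <= arb (Node b cs) l) /\
    fold_right Rplus 0 (map (arb (Node b cs)) (leaves (Node b cs))) = 1.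

(* If V_{s0} lies strictly on the side of a*, then so does the value of some
   child at a P-node (the one realising the max/min) and of every child at a
   Q-node; by induction d_{s0} > 0.  At a node with d_s > 0 the weights never
   use the arbitrary vectors: a leaf of positive weight lies below a child c
   with d_c > 0 and positive weight (the argmax child at a P-node, a summand
   of positive contribution at a Q-node, where all d_c > 0).  Descending
   along such children reaches the leaf itself with d_l > 0, and since
   d(theta, theta) = 0 this forces mu_l strictly on the side of a*. *)

From Stdlib Require Import Reals List Arith Lra Lia.
Import ListNotations.
Open Scope R_scope.

Definition tree_nested_ind (P : tree -> Prop) (HL : forall l, P (Leaf l))
  (HN : forall b cs, (forall c, In c cs -> P c) -> P (Node b cs)) :
  forall t, P t :=
  fix F t := match t with
  | Leaf l => HL l
  | Node b cs => HN b cs ((fix G (l : list tree) : forall c, In c l -> P c :=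
       match l with
       | [] => fun c H => False_ind _ H
       | x :: l' => fun c H => match H with
                   | or_introl e => eq_ind x P (F x) c e
                   | or_intror H' => G l' c H' end
       end) cs)
  end.

Lemma fold_left_Rmax_ub l x :
  x <= fold_left Rmax l x /\ forall y, In y l -> y <= fold_left Rmax l x.
Proof.
  revert x; induction l as [|a l IH]; intros x; simpl; [split; [lra | tauto]|].
  destruct (IH (Rmax x a)) as [Hx Hl].
  pose proof (Rmax_l x a); pose proof (Rmax_r x a).
  split; [lra|]. intros y [<-|Hy]; [lra | auto].
Qed.

Lemma fold_left_Rmin_lb l x :
  fold_left Rmin l x <= x /\ forall y, In y l -> fold_left Rmin l x <= y.
Proof.
  revert x; induction l as [|a l IH]; intros x; simpl; [split; [lra | tauto]|].
  destruct (IH (Rmin x a)) as [Hx Hl].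
  pose proof (Rmin_l x a); pose proof (Rmin_r x a).
  split; [lra|]. intros y [<-|Hy]; [lra | auto].
Qed.

Lemma fold_left_Rmax_in l x : In (fold_left Rmax l x) (x :: l).
Proof.
  revert x; induction l as [|a l IH]; intros x; simpl; [auto|].
  destruct (IH (Rmax x a)) as [<-|H]; [|auto].
  unfold Rmax; destruct (Rle_dec x a); auto.
Qed.

Lemma fold_left_Rmin_in l x : In (fold_left Rmin l x) (x :: l).
Proof.
  revert x; induction l as [|a l IH]; intros x; simpl; [auto|].
  destruct (IH (Rmin x a)) as [<-|H]; [|auto].
  unfold Rmin; destruct (Rle_dec x a); auto.
Qed.

Lemma maxlist_ub l y : In y l -> y <= maxlist l.
Proof.
  destruct l as [|a l]; [intros []|]; simpl.
  destruct (fold_left_Rmax_ub l a) as [Ha Hl]. intros [<-|Hy]; auto.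
Qed.

Lemma minlist_lb l y : In y l -> minlist l <= y.
Proof.
  destruct l as [|a l]; [intros []|]; simpl.
  destruct (fold_left_Rmin_lb l a) as [Ha Hl]. intros [<-|Hy]; auto.
Qed.

Lemma maxlist_in l : l <> [] -> In (maxlist l) l.
Proof. destruct l; [congruence|]. intros _; apply fold_left_Rmax_in. Qed.

Lemma minlist_in l : l <> [] -> In (minlist l) l.
Proof. destruct l; [congruence|]. intros _; apply fold_left_Rmin_in. Qed.

Lemma sum_pos_has_pos l : 0 < fold_right Rplus 0 l -> exists x, In x l /\ 0 < x.
Proof.
  induction l as [|a l IH]; simpl; intros Hs; [lra|].
  destruct (Rlt_dec 0 a) as [Ha|Ha]; [eauto|].
  destruct IH as [x [Hx Hx0]]; [lra | eauto].
Qed.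

Lemma sum_pos l :
  l <> [] -> (forall x, In x l -> 0 < x) -> 0 < fold_right Rplus 0 l.
Proof.
  induction l as [|a [|b l] IH]; simpl; intros Hne Hpos; [congruence | |].
  - specialize (Hpos a (or_introl eq_refl)); lra.
  - assert (0 < a) by auto.
    assert (0 < b + fold_right Rplus 0 l) by (apply IH; [congruence | auto]).
    lra.
Qed.

Lemma Rinv_pos_rev y : 0 < / y -> 0 < y.
Proof. intros H. rewrite <- (Rinv_inv y). now apply Rinv_0_lt_compat. Qed.

Lemma Rdiv_pos_num x y : 0 < y -> 0 < x / y -> 0 < x.
Proof.
  intros Hy Hxy. replace x with (x / y * y) by (field; lra).
  now apply Rmult_lt_0_compat.
Qed.

Lemma combine_map {A B C : Type} (f : A -> B) (g : A -> C) (l : list A) :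
  combine (map f l) (map g l) = map (fun x => (f x, g x)) l.
Proof. induction l; simpl; congruence. Qed.

Lemma rpos_iff x : rpos x = true <-> 0 < x.
Proof. unfold rpos; destruct (Rlt_dec 0 x); split; auto; congruence. Qed.

Lemma label_eq_dec (a b : label) : {a = b} + {a <> b}.
Proof. decide equality. Defined.

Lemma label_eqb_true a b : label_eqb a b = true <-> a = b.
Proof. destruct a, b; simpl; split; congruence. Qed.

Lemma well_formed_node b cs :
  well_formed (Node b cs) -> cs <> [] /\ forall c, In c cs -> well_formed c.
Proof.
  simpl; intros [Hne Hcs]; split; [exact Hne|]; clear Hne.
  induction cs as [|a cs IH]; simpl in *; [tauto|].
  destruct Hcs as [Ha Hcs]; intros c [<-|Hc]; auto.
Qed.

Lemma leaves_child b cs c l :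
  In c cs -> In l (leaves c) -> In l (leaves (Node b cs)).
Proof. intros Hc Hl; apply in_flat_map; eauto. Qed.

Lemma subtrees_child b cs c t :
  In c cs -> In t (subtrees c) -> In t (subtrees (Node b cs)).
Proof. intros Hc Ht; right; apply in_flat_map; eauto. Qed.

Definition on_side (theta : R) (win : bool) (x : R) : Prop :=
  if win then theta < x else x < theta.

Lemma on_sideP theta win x :
  on_side theta win x <-> (win = true -> theta < x) /\ (win = false -> x < theta).
Proof. destruct win; simpl; intuition congruence. Qed.

Lemma on_side_P_node theta mu win b cs :
  b = Plab win -> cs <> [] -> on_side theta win (value mu (Node b cs)) ->
  exists c, In c cs /\ on_side theta win (value mu c).
Proof.
  intros -> Hne Hv.
  assert (Hne' : map (value mu) cs <> []) by (destruct cs; simpl; congruence).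
  destruct win; simpl in Hv;
    [pose proof (maxlist_in _ Hne') as Hin | pose proof (minlist_in _ Hne') as Hin];
    apply in_map_iff in Hin; destruct Hin as [c [Hc Hin]];
    exists c; split; auto; simpl; rewrite Hc; exact Hv.
Qed.

Lemma on_side_Q_node theta mu win b cs :
  b <> Plab win -> on_side theta win (value mu (Node b cs)) ->
  forall c, In c cs -> on_side theta win (value mu c).
Proof.
  intros Hb Hv c Hc. pose proof (in_map (value mu) _ _ Hc) as Hin.
  destruct b, win; simpl in *; try congruence.
  - pose proof (maxlist_ub _ _ Hin); lra.
  - pose proof (minlist_lb _ _ Hin); lra.
Qed.

Lemma cstar_valid_child dKL theta mu win cstar b cs c :
  cstar_valid dKL theta mu win cstar (Node b cs) -> In c cs ->
  cstar_valid dKL theta mu win cstar c.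
Proof. intros Hv Hc b' cs' Hsub; apply Hv; eapply subtrees_child; eauto. Qed.

Section Divergence.

Variables (X : R -> Prop) (dKL : R -> R -> R).
Hypothesis hd_nonneg : forall x y, X x -> X y -> 0 <= dKL x y.
Hypothesis hd_zero : forall x y, X x -> X y -> (dKL x y = 0 <-> x = y).
Variables (theta : R) (mu : nat -> R) (win : bool).
Hypothesis htheta : X theta.

Local Notation d := (dval dKL theta mu win).

Lemma dval_leaf_pos_iff l : X (mu l) -> 0 < d (Leaf l) <-> on_side theta win (mu l).
Proof.
  intros Hl.
  assert (Hd0 : mu l <> theta <-> 0 < dKL (mu l) theta).
  { pose proof (hd_nonneg _ _ Hl htheta) as Hnn.
    pose proof (hd_zero _ _ Hl htheta) as Hz.
    split; intros Hne.
    - destruct (Req_dec (dKL (mu l) theta) 0) as [E|]; [|lra].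
      now apply Hz in E.
    - intros E; apply Hz in E; lra. }
  destruct win; simpl;
    [destruct (Rle_dec theta (mu l)) | destruct (Rlt_dec (mu l) theta)];
    split; intros H; try lra; (apply Hd0 in H || apply Hd0); lra.
Qed.

Lemma dval_P_node_pos b cs c :
  b = Plab win -> In c cs -> 0 < d c -> 0 < d (Node b cs).
Proof.
  intros Hb Hc Hdc; simpl.
  replace (label_eqb b (Plab win)) with true by (symmetry; now apply label_eqb_true).
  eapply Rlt_le_trans; [exact Hdc|]. now apply maxlist_ub, in_map.
Qed.

Lemma dval_Q_node_pos b cs :
  b <> Plab win -> cs <> [] -> (forall c, In c cs -> 0 < d c) -> 0 < d (Node b cs).
Proof.
  intros Hb Hne Hpos; simpl.
  destruct (label_eqb b (Plab win)) eqn:E; [now apply label_eqb_true in E|].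
  replace (forallb rpos (map d cs)) with true.
  2: { symmetry; apply forallb_forall; intros x Hx.
       apply in_map_iff in Hx; destruct Hx as [c [<- Hc]]; now apply rpos_iff, Hpos. }
  apply Rinv_0_lt_compat, sum_pos.
  - destruct cs; simpl; congruence.
  - intros x Hx; rewrite map_map in Hx; apply in_map_iff in Hx.
    destruct Hx as [c [<- Hc]]; now apply Rinv_0_lt_compat, Hpos.
Qed.

Lemma dval_pos t :
  well_formed t -> (forall l, In l (leaves t) -> X (mu l)) ->
  on_side theta win (value mu t) -> 0 < d t.
Proof.
  induction t as [l|b cs IH] using tree_nested_ind; intros Hwf HX Hv.
  - apply dval_leaf_pos_iff; [apply HX; simpl; auto | exact Hv].
  - apply well_formed_node in Hwf; destruct Hwf as [Hne Hwf].
    assert (IHc : forall c, In c cs -> on_side theta win (value mu c) -> 0 < d c).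
    { intros c Hc; apply IH; [exact Hc | now apply Hwf |].
      intros l Hl; apply HX; eapply leaves_child; eauto. }
    destruct (label_eq_dec b (Plab win)) as [Hb|Hb].
    + destruct (on_side_P_node theta mu win b cs Hb Hne Hv) as [c [Hc Hvc]].
      exact (dval_P_node_pos b cs c Hb Hc (IHc c Hc Hvc)).
    + apply dval_Q_node_pos; auto.
      intros c Hc; apply IHc, (on_side_Q_node theta mu win b cs Hb Hv c Hc); auto.
Qed.

Variables (cstar : tree -> nat) (arb : tree -> nat -> R).

Local Notation w := (weights dKL theta mu win cstar arb).

Definition descends_positively (t : tree) (l : nat) : Prop :=
  0 < d t /\ In l (leaves t) /\ 0 < w t l.

Lemma weights_P_node_child b cs l :
  b = Plab win -> cstar_valid dKL theta mu win cstar (Node b cs) ->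
  0 < d (Node b cs) -> 0 < w (Node b cs) l ->
  exists c, In c cs /\ descends_positively c l.
Proof.
  intros Hb Hcs Hd Hw.
  destruct (Hcs b cs) as [Hk Hmax]; [simpl; auto | exact Hb |].
  cbn [weights] in Hw.
  destruct (Rlt_dec 0 (d (Node b cs))) as [_|]; [|contradiction].
  replace (label_eqb b (Plab win)) with true in Hw
    by (symmetry; now apply label_eqb_true).
  rewrite (nth_indep _ [] (leaves (Leaf 0))), map_nth in Hw
    by (now rewrite length_map).
  rewrite (nth_indep _ (fun _ => 0) (w (Leaf 0))), map_nth in Hw
    by (now rewrite length_map).
  set (k := cstar (Node b cs)) in *.
  assert (Hin : In (nth k cs (Leaf 0)) cs) by now apply nth_In.
  exists (nth k cs (Leaf 0)); split; [exact Hin|].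
  destruct (in_dec Nat.eq_dec l (leaves (nth k cs (Leaf 0)))) as [Hl|]; [|lra].
  split; [|split; assumption].
  cbn [dval] in Hd.
  replace (label_eqb b (Plab win)) with true in Hd
    by (symmetry; now apply label_eqb_true).
  assert (Hne : map d cs <> []) by (destruct cs; simpl in *; [lia | congruence]).
  destruct (proj1 (in_map_iff _ _ _) (maxlist_in _ Hne)) as [c [Hc Hc_in]].
  specialize (Hmax c Hc_in); lra.
Qed.

Lemma weights_Q_node_child b cs l :
  b <> Plab win -> 0 < d (Node b cs) -> 0 < w (Node b cs) l ->
  exists c, In c cs /\ descends_positively c l.
Proof.
  intros Hb Hd Hw.
  cbn [weights] in Hw.
  destruct (Rlt_dec 0 (d (Node b cs))) as [_|]; [|contradiction].
  cbn [dval] in Hd.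
  destruct (label_eqb b (Plab win)) eqn:E; [now apply label_eqb_true in E|].
  destruct (forallb rpos (map d cs)) eqn:Hall; [|lra].
  assert (Hdc : forall c, In c cs -> 0 < d c).
  { intros c Hc; apply rpos_iff; rewrite forallb_forall in Hall; now apply Hall, in_map. }
  apply Rinv_pos_rev in Hd.
  rewrite combine_map, (combine_map (fun c => (leaves c, w c)) d), map_map in Hw.
  apply Rdiv_pos_num, sum_pos_has_pos in Hw; [|exact Hd].
  destruct Hw as [z [Hz Hz0]].
  apply in_map_iff in Hz; destruct Hz as [c [<- Hc]].
  exists c; split; [exact Hc|].
  destruct (in_dec Nat.eq_dec l (leaves c)) as [Hl|]; [|lra].
  split; [exact (Hdc c Hc)|split; [exact Hl|]].
  exact (Rdiv_pos_num _ _ (Hdc c Hc) Hz0).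
Qed.

Lemma descends_positively_on_side t l :
  (forall l', In l' (leaves t) -> X (mu l')) ->
  cstar_valid dKL theta mu win cstar t ->
  descends_positively t l -> on_side theta win (mu l).
Proof.
  induction t as [l0|b cs IH] using tree_nested_ind; intros HX Hcs [Hd [Hl Hw]].
  - destruct Hl as [<-|[]].
    apply (dval_leaf_pos_iff l0); [apply HX; simpl; auto | exact Hd].
  - assert (Hchild : exists c, In c cs /\ descends_positively c l).
    { destruct (label_eq_dec b (Plab win)) as [Hb|Hb].
      - now apply (weights_P_node_child b).
      - now apply (weights_Q_node_child b). }
    destruct Hchild as [c [Hc Hpos]].
    apply (IH c Hc); [| eapply cstar_valid_child; eauto | exact Hpos].
    intros l' Hl'; apply HX; eapply leaves_child; eauto.
Qed.

End Divergence.

Theorem proposition1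
  (X : R -> Prop) (dKL : R -> R -> R)
  (hd_nonneg : forall x y, X x -> X y -> 0 <= dKL x y)
  (hd_zero : forall x y, X x -> X y -> (dKL x y = 0 <-> x = y))
  (theta : R) (htheta : X theta)
  (T : tree) (hwf : well_formed T) (hnodup : NoDup (leaves T))
  (mu : nat -> R) (hmu : forall l, In l (leaves T) -> X (mu l))
  (hV : value mu T <> theta)
  (cstar : tree -> nat) (arb : tree -> nat -> R)
  (win : bool) (hwin : win = true <-> theta <= value mu T)
  (hcstar : cstar_valid dKL theta mu win cstar T)
  (harb : arb_valid arb T) :
  forall l, In l (leaves T) ->
    0 < weights dKL theta mu win cstar arb T l ->
    (win = true -> theta < mu l) /\ (win = false -> mu l < theta).
Proof.
  intros l Hl Hw.
  assert (Hroot : on_side theta win (value mu T)).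
  { destruct win; simpl.
    - assert (theta <= value mu T) by now apply hwin. lra.
    - destruct (Rle_lt_dec theta (value mu T)) as [H|H]; [|exact H].
      now apply hwin in H. }
  apply on_sideP, (descends_positively_on_side X dKL hd_nonneg hd_zero theta mu win htheta
                     cstar arb T); auto.
  repeat split; auto.
  now apply (dval_pos X dKL hd_nonneg hd_zero theta mu win htheta).
Qed.
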